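(* Let $G$ be a connected undirected weighted graph on $n$ nodes (weights normalized as below) with maximum weighted degree $d_{\max}<\frac{n^{1/5}}{16\ln n}$. Then, for all sufficiently large $n$, $\mathsf{OPT}(G)>\frac{1}{8\,d_{\max}}$.
   Context: Weighted modularity: $G=(V,E,\ell)$ is an undirected graph with nonnegative edge weights $\ell$; $a_{u,v}=\ell(u,v)$ if $\{u,v\}\in E$ and $0$ otherwise; $d_u=\sum_{v}a_{u,v}$ is the weighted degree, $d_{\max}=\max_v d_v$. Weights are normalized (by a common scaling, which does not change modularity) so that $\sum_{v\in V}d_v=2|E|$, and $m=\frac12\sum_v d_v$. For $C\subseteq V$, $\mathsf M(C)=\frac{1}{2m}\sum_{u\in C}\sum_{v\in C}\big(a_{u,v}-\frac{d_ud_v}{2m}\big)$, the sum over all ordered pairs including $u=v$. A clustering is a partition $\mathcal S$ of $V$ into nonempty clusters, $\mathsf M(\mathcal S)=\sum_{C\in\mathcal S}\mathsf M(C)$, and $\mathsf{OPT}(G)$ is the maximum of $\mathsf M(\mathcal S)$ over all clusterings. *)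

From Stdlib Require Import Reals Lra Lia Arith.
Open Scope R_scope.

(* Vertices of a graph on n nodes are 0, ..., n-1. *)

Fixpoint fsum (n : nat) (f : nat -> R) : R :=
  match n with
  | O => 0
  | S k => fsum k f + f k
  end.

Fixpoint ncount (n : nat) (P : nat -> bool) : nat :=
  match n with
  | O => O
  | S k => (ncount k P + (if P k then 1 else 0))%nat
  end.

Definition wgraph (n : nat) (E : nat -> nat -> bool) (l : nat -> nat -> R) : Prop :=
  (forall u v, (u < n)%nat -> (v < n)%nat -> E u v = E v u) /\
  (forall u, (u < n)%nat -> E u u = false) /\
  (forall u v, (u < n)%nat -> (v < n)%nat -> l u v = l v u) /\
  (forall u v, (u < n)%nat -> (v < n)%nat -> 0 <= l u v).

Definition adj (E : nat -> nat -> bool) (l : nat -> nat -> R) (u v : nat) : R :=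
  if E u v then l u v else 0.

Definition deg (n : nat) E l (u : nat) : R := fsum n (fun v => adj E l u v).

Fixpoint maxupto (k : nat) (f : nat -> R) : R :=
  match k with
  | O => 0
  | S j => Rmax (maxupto j f) (f j)
  end.
Definition dmax (n : nat) E l : R := maxupto n (deg n E l).

(* |E| : number of unordered pairs {u,v} with u < v < n that are edges *)
Fixpoint num_edges_upto (k : nat) (E : nat -> nat -> bool) : nat :=
  match k with
  | O => O
  | S v => (num_edges_upto v E + ncount v (fun u => E u v))%nat
  end.
Definition num_edges (n : nat) E : nat := num_edges_upto n E.

Definition normalized (n : nat) E l : Prop :=
  fsum n (deg n E l) = 2 * INR (num_edges n E).

Definition mtot (n : nat) E l : R := fsum n (deg n E l) / 2.

Inductive reach (n : nat) (E : nat -> nat -> bool) (u : nat) : nat -> Prop :=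
  | reach_refl : reach n E u u
  | reach_step : forall w v, reach n E u w -> (w < n)%nat -> (v < n)%nat ->
                 E w v = true -> reach n E u v.
Definition connected (n : nat) E : Prop :=
  forall u v, (u < n)%nat -> (v < n)%nat -> reach n E u v.

Definition Mod_cluster (n : nat) E l (C : nat -> bool) : R :=
  let m := mtot n E l in
  / (2 * m) * fsum n (fun u => fsum n (fun v =>
     if andb (C u) (C v) then adj E l u v - deg n E l u * deg n E l v / (2 * m)
     else 0)).

(* A clustering is represented by a labelling c : vertex -> label < n;
   the clusters are the nonempty fibres {v | c v = k}.  Empty fibres have
   modularity 0, so summing over all labels k < n gives sum_{C in S} M(C). *)
Definition is_clustering (n : nat) (c : nat -> nat) : Prop :=
  forall v, (v < n)%nat -> (c v < n)%nat.

Definition Mod (n : nat) E l (c : nat -> nat) : R :=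
  fsum n (fun k => Mod_cluster n E l (fun v => Nat.eqb (c v) k)).

(* OPT(G) > x  <->  some clustering has modularity > x
   (OPT is a maximum over the finitely many clusterings). *)
Definition OPT_gt (n : nat) E l (x : R) : Prop :=
  exists c, is_clustering n c /\ Mod n E l c > x.

From Stdlib Require Import Reals Lra Lia Arith Classical.
Open Scope R_scope.

(* Take a matching [p] on edges of weight at least 1/2 whose weight is within [eps] of the
   largest possible.  Then no rematching step (match [u] with [v], free their old partners)
   can help, so every heavy edge [uv] satisfies [a(u,v) <= M u + M v + eps], where [M x] is
   the weight of the matched edge at [x].  By the normalization the average edge weight is 1,
   so heavy edges carry at least half of the total weight [m]; charging each of them to the
   matched edges at its endpoints, and using that a vertex has at most [2 dmax] heavy
   neighbours, gives [m <= (4 dmax - 1) W + 4 m eps] with [W = sum_x M x].  The clustering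
   into matched pairs has modularity at least [W/(2m) - dmax/m].  Connectivity gives
   [2m >= n], and with [dmax < n^(1/5)/16] and [eps = 1/(256 dmax^2)] this exceeds
   [1/(8 dmax)]. *)

Lemma fsum_ext n f g : (forall i, (i < n)%nat -> f i = g i) -> fsum n f = fsum n g.
Proof.
  induction n as [|n IH]; intros Hfg; simpl; [reflexivity|].
  rewrite IH by (intros; apply Hfg; lia).
  now rewrite Hfg by lia.
Qed.

Lemma fsum_le n f g : (forall i, (i < n)%nat -> f i <= g i) -> fsum n f <= fsum n g.
Proof.
  induction n as [|n IH]; intros Hfg; simpl; [lra|].
  assert (fsum n f <= fsum n g) by (apply IH; intros; apply Hfg; lia).
  assert (f n <= g n) by (apply Hfg; lia).
  lra.
Qed.

Lemma fsum_plus n f g : fsum n (fun i => f i + g i) = fsum n f + fsum n g.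
Proof. induction n as [|n IH]; simpl; [|rewrite IH]; lra. Qed.

Lemma fsum_minus n f g : fsum n (fun i => f i - g i) = fsum n f - fsum n g.
Proof. induction n as [|n IH]; simpl; [|rewrite IH]; lra. Qed.

Lemma fsum_scal n c f : fsum n (fun i => c * f i) = c * fsum n f.
Proof. induction n as [|n IH]; simpl; [|rewrite IH]; lra. Qed.

Lemma fsum_const n c : fsum n (fun _ => c) = INR n * c.
Proof. induction n as [|n IH]; simpl fsum; [simpl|rewrite IH, S_INR]; lra. Qed.

Lemma fsum_zero n : fsum n (fun _ => 0) = 0.
Proof. rewrite fsum_const; lra. Qed.

Lemma fsum_swap n k f :
  fsum n (fun i => fsum k (fun j => f i j)) = fsum k (fun j => fsum n (fun i => f i j)).
Proof.
  induction n as [|n IH]; simpl.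
  - now rewrite fsum_zero.
  - now rewrite IH, <- fsum_plus.
Qed.

Lemma fsum_nonneg n f : (forall i, (i < n)%nat -> 0 <= f i) -> 0 <= fsum n f.
Proof. intros Hf; rewrite <- (fsum_zero n); now apply fsum_le. Qed.

Lemma fsum_ge_term n f k :
  (forall i, (i < n)%nat -> 0 <= f i) -> (k < n)%nat -> f k <= fsum n f.
Proof.
  induction n as [|n IH]; intros Hf Hk; simpl; [lia|].
  assert (0 <= fsum n f) by (apply fsum_nonneg; intros; apply Hf; lia).
  destruct (Nat.eq_dec k n) as [->|Hkn]; [lra|].
  assert (f k <= fsum n f) by (apply IH; [intros; apply Hf|]; lia).
  assert (0 <= f n) by (apply Hf; lia).
  lra.
Qed.

Lemma fsum_delta n k c : (k < n)%nat -> fsum n (fun i => if Nat.eqb i k then c else 0) = c.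
Proof.
  induction n as [|n IH]; intros Hk; simpl; [lia|].
  destruct (Nat.eq_dec k n) as [->|Hkn].
  - rewrite Nat.eqb_refl, (fsum_ext _ _ (fun _ => 0)), fsum_zero; [lra|].
    intros i Hi; destruct (Nat.eqb_spec i n); [lia|reflexivity].
  - rewrite IH by lia; destruct (Nat.eqb_spec n k); [lia|lra].
Qed.

Lemma fsum_count n (P : nat -> bool) : fsum n (fun i => if P i then 1 else 0) = INR (ncount n P).
Proof. induction n as [|n IH]; simpl; auto. rewrite IH, plus_INR; destruct (P n); simpl; lra. Qed.

Lemma maxupto_ge k f i : (i < k)%nat -> f i <= maxupto k f.
Proof.
  induction k as [|k IH]; intros Hi; simpl; [lia|].
  destruct (Nat.eq_dec i k) as [->|]; [apply Rmax_r|].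
  eapply Rle_trans; [apply IH; lia|apply Rmax_l].
Qed.

Definition edge_ind (E : nat -> nat -> bool) u v : R := if E u v then 1 else 0.

Lemma edge_ind_sum_upto n E :
  (forall u v, (u < n)%nat -> (v < n)%nat -> E u v = E v u) ->
  (forall u, (u < n)%nat -> E u u = false) ->
  forall k, (k <= n)%nat ->
  fsum k (fun u => fsum k (edge_ind E u)) = 2 * INR (num_edges_upto k E).
Proof.
  intros Hsym Hirr; induction k as [|k IH]; intros Hk; simpl; [lra|].
  rewrite fsum_plus, (IH ltac:(lia)), plus_INR, <- fsum_count.
  unfold edge_ind at 3; rewrite Hirr by lia.
  rewrite (fsum_ext k (edge_ind E k) (fun u => if E u k then 1 else 0)); [unfold edge_ind; lra|].
  intros i Hi; unfold edge_ind; rewrite Hsym by lia; reflexivity.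
Qed.

Section Graph.

Variables (n : nat) (E : nat -> nat -> bool) (l : nat -> nat -> R).
Hypothesis G : wgraph n E l.

Lemma adj_sym u v : (u < n)%nat -> (v < n)%nat -> adj E l u v = adj E l v u.
Proof. destruct G as (Hs & _ & Hls & _); intros; unfold adj; now rewrite Hs, Hls. Qed.

Lemma adj_ge0 u v : (u < n)%nat -> (v < n)%nat -> 0 <= adj E l u v.
Proof. destruct G as (_ & _ & _ & Hl); intros; unfold adj; destruct (E u v); auto; lra. Qed.

Lemma adj_diag u : (u < n)%nat -> adj E l u u = 0.
Proof. destruct G as (_ & Hirr & _); intros; unfold adj; now rewrite Hirr. Qed.

Lemma deg_ge0 u : (u < n)%nat -> 0 <= deg n E l u.
Proof. intros; apply fsum_nonneg; intros; now apply adj_ge0. Qed.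

Lemma deg_le_dmax u : (u < n)%nat -> deg n E l u <= dmax n E l.
Proof. intros; now apply maxupto_ge. Qed.

Lemma sum_deg : fsum n (deg n E l) = 2 * mtot n E l.
Proof. unfold mtot; lra. Qed.

Lemma sum_adj : fsum n (fun u => fsum n (adj E l u)) = 2 * mtot n E l.
Proof. exact sum_deg. Qed.

Lemma sum_edge_ind : normalized n E l -> fsum n (fun u => fsum n (edge_ind E u)) = 2 * mtot n E l.
Proof.
  intros Hnorm; destruct G as (Hs & Hirr & _).
  rewrite edge_ind_sum_upto with (n := n), <- sum_deg by auto.
  now rewrite Hnorm.
Qed.

Lemma connected_has_neighbour u :
  connected n E -> (2 <= n)%nat -> (u < n)%nat -> 1 <= fsum n (edge_ind E u).
Proof.
  intros Hc Hn Hu; destruct G as (Hs & _).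
  set (v := if Nat.eqb u 0 then 1%nat else 0%nat).
  assert (Hv : (v < n)%nat) by (unfold v; destruct (Nat.eqb u 0); lia).
  assert (Hvu : v <> u) by (unfold v; destruct (Nat.eqb_spec u 0); lia).
  pose proof (Hc v u Hv Hu) as Hr.
  inversion Hr as [Heq|w u' _ Hw _ Hwu]; [congruence|subst u'].
  rewrite Hs in Hwu by auto.
  replace 1 with (edge_ind E u w) by (unfold edge_ind; now rewrite Hwu).
  apply fsum_ge_term; auto; intros i _; unfold edge_ind; destruct (E u i); lra.
Qed.

End Graph.

Section Matching.

Variables (n : nat) (E : nat -> nat -> bool) (l : nat -> nat -> R).
Hypothesis G : wgraph n E l.

(* A matching is an involution [p] of the vertices; fixed points are unmatched. *)
Definition heavy_matching (p : nat -> nat) : Prop :=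
  forall x, (x < n)%nat ->
  (p x < n)%nat /\ p (p x) = x /\ (p x <> x -> 1/2 <= adj E l x (p x)).

Definition mweight (p : nat -> nat) x : R := if Nat.eqb (p x) x then 0 else adj E l x (p x).

(* Every matched edge is counted twice, once from each endpoint. *)
Definition matching_weight (p : nat -> nat) : R := fsum n (mweight p).

Definition rematch (p : nat -> nat) u v x : nat :=
  if Nat.eqb x u then v else if Nat.eqb x v then u else
  if orb (Nat.eqb (p x) u) (Nat.eqb (p x) v) then x else p x.

Definition iverson (b : bool) (c : R) : R := if b then c else 0.

Section FixedMatching.

Variable p : nat -> nat.
Hypothesis Hp : heavy_matching p.

Lemma mweight_ge0 x : (x < n)%nat -> 0 <= mweight p x.
Proof.
  intros Hx; unfold mweight; destruct (Nat.eqb _ _); [lra|].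
  apply (adj_ge0 n E l G); auto; apply Hp, Hx.
Qed.

Lemma mweight_partner x : (x < n)%nat -> mweight p (p x) = mweight p x.
Proof.
  intros Hx; destruct (Hp x Hx) as (Hpx & Hppx & _); unfold mweight; rewrite Hppx.
  destruct (Nat.eqb_spec x (p x)), (Nat.eqb_spec (p x) x); try lia; auto.
  now apply (adj_sym n E l G).
Qed.

Section Rematch.

Variables u v : nat.
Hypotheses (Hu : (u < n)%nat) (Hv : (v < n)%nat) (Hheavy : 1/2 <= adj E l u v).

Lemma heavy_edge_neq : u <> v.
Proof. intros <-; rewrite (adj_diag n E l G) in Hheavy by auto; lra. Qed.

Lemma rematch_heavy_matching : heavy_matching (rematch p u v).
Proof.
  pose proof heavy_edge_neq as Huv.
  intros x Hx; destruct (Hp x Hx) as (H1 & H2 & H3); unfold rematch.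
  destruct (Nat.eqb_spec x u) as [->|Hxu].
  { rewrite (proj2 (Nat.eqb_neq v u)), Nat.eqb_refl by auto; auto. }
  destruct (Nat.eqb_spec x v) as [->|Hxv].
  { rewrite Nat.eqb_refl; repeat split; auto; intros; now rewrite (adj_sym n E l G). }
  destruct (Nat.eqb_spec (p x) u) as [Hpxu|]; simpl.
  { rewrite (proj2 (Nat.eqb_neq x u)), (proj2 (Nat.eqb_neq x v)) by auto.
    rewrite Hpxu, Nat.eqb_refl; simpl; repeat split; auto; congruence. }
  destruct (Nat.eqb_spec (p x) v) as [Hpxv|]; simpl.
  { rewrite (proj2 (Nat.eqb_neq x u)), (proj2 (Nat.eqb_neq x v)) by auto.
    rewrite Hpxv, Nat.eqb_refl, Bool.orb_true_r; repeat split; auto; congruence. }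
  rewrite H2, (proj2 (Nat.eqb_neq (p x) u)), (proj2 (Nat.eqb_neq (p x) v)),
    (proj2 (Nat.eqb_neq x u)), (proj2 (Nat.eqb_neq x v)) by auto; simpl.
  auto.
Qed.

Hypothesis Hpuv : p u <> v.

Lemma rematch_pointwise x : (x < n)%nat ->
  mweight p x + iverson (Nat.eqb x u) (adj E l u v) + iverson (Nat.eqb x v) (adj E l u v)
  <= mweight (rematch p u v) x + iverson (Nat.eqb x u) (mweight p u)
     + iverson (Nat.eqb x v) (mweight p v) + iverson (Nat.eqb x (p u)) (mweight p u)
     + iverson (Nat.eqb x (p v)) (mweight p v).
Proof.
  intros Hx; pose proof heavy_edge_neq as Huv.
  destruct (Hp u Hu) as (_ & Hppu & _), (Hp v Hv) as (_ & Hppv & _).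
  assert (Hpvu : p v <> u) by congruence.
  pose proof (mweight_ge0 u Hu); pose proof (mweight_ge0 v Hv); pose proof (mweight_ge0 x Hx).
  assert (Hmu : mweight (rematch p u v) u = adj E l u v).
  { unfold mweight, rematch; rewrite Nat.eqb_refl, (proj2 (Nat.eqb_neq v u)) by auto.
    reflexivity. }
  assert (Hmv : mweight (rematch p u v) v = adj E l u v).
  { unfold mweight, rematch; rewrite Nat.eqb_refl, (proj2 (Nat.eqb_neq v u)),
      (proj2 (Nat.eqb_neq u v)) by auto.
    now apply (adj_sym n E l G). }
  unfold iverson.
  destruct (Nat.eqb_spec x u) as [->|Hxu].
  { rewrite Hmu, (proj2 (Nat.eqb_neq u v)) by auto.
    destruct (Nat.eqb_spec u (p v)); [congruence|].
    destruct (Nat.eqb_spec u (p u)); lra. }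
  destruct (Nat.eqb_spec x v) as [->|Hxv].
  { rewrite Hmv.
    destruct (Nat.eqb_spec v (p u)); [congruence|].
    destruct (Nat.eqb_spec v (p v)); lra. }
  destruct (Nat.eqb_spec x (p u)) as [->|Hxpu].
  { assert (Hnew : mweight (rematch p u v) (p u) = 0).
    { unfold mweight, rematch; rewrite (proj2 (Nat.eqb_neq (p u) u)),
        (proj2 (Nat.eqb_neq (p u) v)), Hppu, Nat.eqb_refl by auto; simpl.
      now rewrite Nat.eqb_refl. }
    rewrite Hnew, (mweight_partner u Hu).
    destruct (Nat.eqb_spec (p u) (p v)); [congruence|lra]. }
  destruct (Nat.eqb_spec x (p v)) as [->|Hxpv].
  { assert (Hnew : mweight (rematch p u v) (p v) = 0).
    { unfold mweight, rematch; rewrite (proj2 (Nat.eqb_neq (p v) u)),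
        (proj2 (Nat.eqb_neq (p v) v)), Hppv, Nat.eqb_refl, Bool.orb_true_r by auto.
      now rewrite Nat.eqb_refl. }
    rewrite Hnew, (mweight_partner v Hv); lra. }
  assert (Hsame : mweight (rematch p u v) x = mweight p x).
  { destruct (Hp x Hx) as (_ & Hppx & _).
    unfold mweight, rematch; rewrite (proj2 (Nat.eqb_neq x u)), (proj2 (Nat.eqb_neq x v)),
      (proj2 (Nat.eqb_neq (p x) u)), (proj2 (Nat.eqb_neq (p x) v)) by congruence.
    reflexivity. }
  lra.
Qed.

Lemma rematch_gain :
  matching_weight p + 2 * (adj E l u v - mweight p u - mweight p v)
  <= matching_weight (rematch p u v).
Proof.
  destruct (Hp u Hu) as (Hpu & _), (Hp v Hv) as (Hpv & _).
  pose proof (fsum_le n _ _ rematch_pointwise) as Hsum.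
  rewrite !fsum_plus in Hsum; unfold iverson in Hsum.
  rewrite !fsum_delta in Hsum by auto.
  unfold matching_weight; lra.
Qed.

End Rematch.

End FixedMatching.

Lemma matching_weight_le_sum_deg p : heavy_matching p -> matching_weight p <= fsum n (deg n E l).
Proof.
  intros Hp; apply fsum_le; intros x Hx; unfold mweight.
  destruct (Nat.eqb _ _); [now apply (deg_ge0 n E l G)|].
  apply (fsum_ge_term n (adj E l x)); [intros; now apply (adj_ge0 n E l G)|apply Hp, Hx].
Qed.

(* A matching whose weight is within [eps] of the supremum cannot be improved by [rematch]. *)
Lemma exists_locally_optimal_matching eps : 0 < eps ->
  exists p, heavy_matching p /\
  forall u v, (u < n)%nat -> (v < n)%nat -> 1/2 <= adj E l u v ->
  adj E l u v <= mweight p u + mweight p v + eps.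
Proof.
  intros Heps.
  set (W := fun r => exists p, heavy_matching p /\ r = matching_weight p).
  assert (Hbound : bound W).
  { exists (fsum n (deg n E l)); intros r (p & Hp & ->).
    now apply matching_weight_le_sum_deg. }
  assert (Hne : exists r, W r).
  { exists (matching_weight (fun x => x)), (fun x => x); split; auto.
    intros x Hx; repeat split; auto; congruence. }
  destruct (completeness W Hbound Hne) as [sup [Hub Hleast]].
  assert (Hnear : exists p, heavy_matching p /\ sup - eps < matching_weight p).
  { apply NNPP; intros Hno.
    enough (sup <= sup - eps) by lra.
    apply Hleast; intros r (p & Hp & ->); apply Rnot_lt_le; intros Hlt.
    apply Hno; now exists p. }
  destruct Hnear as (p & Hp & Hpw); exists p; split; auto.
  intros u v Hu Hv Hheavy; apply Rnot_lt_le; intros Hlt.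
  destruct (Nat.eq_dec (p u) v) as [Hpuv|Hpuv].
  - assert (mweight p u = adj E l u v).
    { unfold mweight; rewrite Hpuv; destruct (Nat.eqb_spec v u) as [->|]; auto.
      rewrite (adj_diag n E l G) in * by auto; lra. }
    pose proof (mweight_ge0 p Hp v Hv); lra.
  - pose proof (rematch_gain p Hp u v Hu Hv Hheavy Hpuv).
    assert (Hw : W (matching_weight (rematch p u v))).
    { exists (rematch p u v); split; auto; now apply rematch_heavy_matching. }
    pose proof (Hub _ Hw); lra.
Qed.

End Matching.

Section Counting.

Variables (n : nat) (E : nat -> nat -> bool) (l : nat -> nat -> R).
Hypothesis G : wgraph n E l.

Definition heavy u v : R := if Rle_dec (1/2) (adj E l u v) then 1 else 0.

Lemma heavy_le_2adj u v : (u < n)%nat -> (v < n)%nat -> heavy u v <= 2 * adj E l u v.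
Proof.
  intros Hu Hv; pose proof (adj_ge0 n E l G u v Hu Hv).
  unfold heavy; destruct (Rle_dec _ _); lra.
Qed.

Lemma heavy_sym u v : (u < n)%nat -> (v < n)%nat -> heavy u v = heavy v u.
Proof. intros; unfold heavy; now rewrite (adj_sym n E l G u v). Qed.

(* Edges lighter than 1/2 carry less than half of the total weight, because under the
   normalization the average edge weight is 1. *)
Lemma heavy_edges_carry_half : normalized n E l ->
  mtot n E l <= fsum n (fun u => fsum n (fun v => heavy u v * adj E l u v)).
Proof.
  intros Hnorm.
  assert (Hpt : fsum n (fun u => fsum n (adj E l u)) <=
    fsum n (fun u => fsum n (fun v => heavy u v * adj E l u v + / 2 * edge_ind E u v))).
  { apply fsum_le; intros u Hu; apply fsum_le; intros v Hv.
    unfold heavy, edge_ind; pose proof (adj_ge0 n E l G u v Hu Hv).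
    destruct (Rle_dec _ _), (E u v) eqn:He; try lra.
    unfold adj in *; rewrite He in *; lra. }
  rewrite (sum_adj n E l) in Hpt.
  rewrite (fsum_ext n _ (fun u => fsum n (fun v => heavy u v * adj E l u v)
                                  + / 2 * fsum n (edge_ind E u))), fsum_plus, fsum_scal,
    (sum_edge_ind n E l G Hnorm) in Hpt; [lra|].
  intros u _; now rewrite fsum_plus, fsum_scal.
Qed.

Lemma heavy_degree_le u : (u < n)%nat -> fsum n (heavy u) <= 2 * dmax n E l.
Proof.
  intros Hu; apply Rle_trans with (fsum n (fun v => 2 * adj E l u v)).
  - apply fsum_le; intros; now apply heavy_le_2adj.
  - rewrite fsum_scal.
    assert (fsum n (adj E l u) <= dmax n E l) by exact (deg_le_dmax n E l u Hu).
    lra.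
Qed.

Lemma sum_heavy_weighted f : (forall u, (u < n)%nat -> 0 <= f u) ->
  fsum n (fun u => fsum n (fun v => heavy u v * f u)) <= 2 * dmax n E l * fsum n f.
Proof.
  intros Hf; rewrite <- fsum_scal; apply fsum_le; intros u Hu.
  rewrite (fsum_ext n _ (fun v => f u * heavy u v)), fsum_scal by (intros; lra).
  pose proof (heavy_degree_le u Hu); pose proof (Hf u Hu); nra.
Qed.

Lemma sum_heavy_le : fsum n (fun u => fsum n (heavy u)) <= 4 * mtot n E l.
Proof.
  replace (4 * mtot n E l) with (2 * (2 * mtot n E l)) by ring.
  rewrite <- (sum_adj n E l), <- fsum_scal; apply fsum_le; intros u Hu.
  rewrite <- fsum_scal; apply fsum_le; intros v Hv; now apply heavy_le_2adj.
Qed.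

Section LocallyOptimal.

Variables (p : nat -> nat) (eps : R).
Hypotheses (Hp : heavy_matching n E l p) (Heps : 0 <= eps).
Hypothesis Hopt : forall u v, (u < n)%nat -> (v < n)%nat -> 1/2 <= adj E l u v ->
  adj E l u v <= mweight E l p u + mweight E l p v + eps.

Lemma heavy_adj_le u v : (u < n)%nat -> (v < n)%nat ->
  heavy u v * adj E l u v
  <= heavy u v * (mweight E l p u + mweight E l p v + eps)
     - iverson (Nat.eqb v (p u)) (mweight E l p u).
Proof.
  intros Hu Hv; destruct (Hp u Hu) as (Hpu & _ & Hpu_heavy).
  pose proof (mweight_ge0 n E l G p Hp u Hu) as Hmu.
  pose proof (mweight_ge0 n E l G p Hp v Hv) as Hmv.
  unfold iverson; destruct (Nat.eqb_spec v (p u)) as [->|Hvpu].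
  - destruct (Nat.eq_dec (p u) u) as [Hfix|Hmatched].
    + unfold heavy, mweight; rewrite Hfix, Nat.eqb_refl, (adj_diag n E l G u Hu).
      destruct (Rle_dec _ _); lra.
    + assert (Hw : mweight E l p u = adj E l u (p u)).
      { unfold mweight; now rewrite (proj2 (Nat.eqb_neq _ _) Hmatched). }
      rewrite (mweight_partner n E l G p Hp u Hu).
      unfold heavy; destruct (Rle_dec _ _); [lra|].
      specialize (Hpu_heavy Hmatched); lra.
  - unfold heavy; destruct (Rle_dec _ _) as [Hh|]; [|lra].
    specialize (Hopt u v Hu Hv Hh); lra.
Qed.

Lemma total_weight_le_matching_weight : normalized n E l ->
  mtot n E l <= (4 * dmax n E l - 1) * matching_weight n E l p + 4 * mtot n E l * eps.
Proof.
  intros Hnorm.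
  set (M := mweight E l p); set (W := matching_weight n E l p).
  assert (HM : forall u, (u < n)%nat -> 0 <= M u) by exact (mweight_ge0 n E l G p Hp).
  assert (Hsplit : forall u, (u < n)%nat ->
      fsum n (fun v => heavy u v * (M u + M v + eps) - iverson (Nat.eqb v (p u)) (M u))
      = fsum n (fun v => heavy u v * M u) + fsum n (fun v => heavy u v * M v)
        + eps * fsum n (heavy u) - M u).
  { intros u Hu; unfold iverson.
    rewrite fsum_minus, fsum_delta, <- fsum_scal, <- !fsum_plus by apply Hp, Hu.
    f_equal; apply fsum_ext; intros; lra. }
  assert (Hsym : fsum n (fun u => fsum n (fun v => heavy u v * M v))
               = fsum n (fun u => fsum n (fun v => heavy u v * M u))).
  { rewrite fsum_swap; apply fsum_ext; intros v Hv; apply fsum_ext; intros u Hu.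
    now rewrite heavy_sym. }
  pose proof (fsum_le n _ _ (fun u Hu => fsum_le n _ _ (fun v Hv => heavy_adj_le u v Hu Hv)))
    as Hle.
  fold M in Hle; rewrite (fsum_ext n _ _ Hsplit), !fsum_minus, !fsum_plus, fsum_scal, Hsym in Hle.
  pose proof (heavy_edges_carry_half Hnorm).
  pose proof (sum_heavy_weighted M HM).
  pose proof sum_heavy_le.
  assert (eps * fsum n (fun u => fsum n (heavy u)) <= eps * (4 * mtot n E l))
    by (apply Rmult_le_compat_l; auto).
  unfold W, matching_weight; fold M; lra.
Qed.

End LocallyOptimal.

End Counting.

Lemma fsum_same_label n (c : nat -> nat) u v (x : R) : (c u < n)%nat ->
  fsum n (fun k => if andb (Nat.eqb (c u) k) (Nat.eqb (c v) k) then x else 0) =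
  if Nat.eqb (c u) (c v) then x else 0.
Proof.
  intros Hc; destruct (Nat.eqb_spec (c u) (c v)) as [Heq|Hne].
  - transitivity (fsum n (fun k => if Nat.eqb k (c u) then x else 0)); [|now apply fsum_delta].
    apply fsum_ext; intros k _.
    rewrite <- Heq, (Nat.eqb_sym (c u) k); destruct (Nat.eqb k (c u)); reflexivity.
  - transitivity (fsum n (fun _ => 0)); [apply fsum_ext; intros k _|apply fsum_zero].
    destruct (Nat.eqb_spec (c u) k), (Nat.eqb_spec (c v) k); simpl; [congruence|reflexivity..].
Qed.

Lemma Mod_pairs n E l (c : nat -> nat) : is_clustering n c ->
  Mod n E l c = / (2 * mtot n E l) * fsum n (fun u => fsum n (fun v =>
     if Nat.eqb (c u) (c v)
     then adj E l u v - deg n E l u * deg n E l v / (2 * mtot n E l) else 0)).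
Proof.
  intros Hc; unfold Mod, Mod_cluster; cbv zeta; rewrite fsum_scal; f_equal.
  rewrite fsum_swap; apply fsum_ext; intros u Hu.
  rewrite fsum_swap; apply fsum_ext; intros v Hv.
  now apply fsum_same_label, Hc.
Qed.

Section PairClustering.

Variables (n : nat) (E : nat -> nat -> bool) (l : nat -> nat -> R).
Hypothesis G : wgraph n E l.
Variable p : nat -> nat.
Hypothesis Hp : heavy_matching n E l p.

Definition pair_clustering u : nat := Nat.min u (p u).

Lemma pair_clustering_is_clustering : is_clustering n pair_clustering.
Proof. intros v Hv; unfold pair_clustering; lia. Qed.

Lemma pair_clustering_same u v : (u < n)%nat -> (v < n)%nat ->
  pair_clustering u = pair_clustering v <-> v = u \/ v = p u.
Proof.
  intros Hu Hv; destruct (Hp u Hu) as (_ & Hppu & _), (Hp v Hv) as (_ & Hppv & _).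
  unfold pair_clustering; split.
  - intros Heq.
    destruct (Nat.le_ge_cases u (p u)), (Nat.le_ge_cases v (p v));
      rewrite ?(Nat.min_l u), ?(Nat.min_r u), ?(Nat.min_l v), ?(Nat.min_r v) in Heq by auto;
      [left | right | right | left]; congruence.
  - intros [-> | ->]; [reflexivity|]; rewrite Hppu; lia.
Qed.

Hypothesis Hm : 0 < mtot n E l.

Let cost u := deg n E l u * dmax n E l / (2 * mtot n E l).

Lemma cost_bounds u v : (u < n)%nat -> (v < n)%nat ->
  0 <= cost u /\ deg n E l u * deg n E l v / (2 * mtot n E l) <= cost u.
Proof.
  intros Hu Hv; unfold cost.
  pose proof (deg_ge0 n E l G u Hu); pose proof (deg_ge0 n E l G v Hv).
  pose proof (deg_le_dmax n E l v Hv).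
  assert (0 < / (2 * mtot n E l)) by (apply Rinv_0_lt_compat; lra).
  unfold Rdiv; split; [|apply Rmult_le_compat_r; [lra|apply Rmult_le_compat_l; auto]].
  apply Rmult_le_pos; [apply Rmult_le_pos|]; lra.
Qed.

Lemma pair_term_ge u v : (u < n)%nat -> (v < n)%nat ->
  iverson (Nat.eqb v (p u)) (mweight E l p u) - iverson (Nat.eqb v u) (cost u)
  - iverson (Nat.eqb v (p u)) (cost u)
  <= if Nat.eqb (pair_clustering u) (pair_clustering v)
     then adj E l u v - deg n E l u * deg n E l v / (2 * mtot n E l) else 0.
Proof.
  intros Hu Hv; destruct (cost_bounds u v Hu Hv) as [Hc0 Hc].
  pose proof (adj_ge0 n E l G u v Hu Hv).
  assert (Hpartner : v = p u -> mweight E l p u <= adj E l u v).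
  { intros ->; unfold mweight; destruct (Nat.eqb _ _); lra. }
  pose proof (pair_clustering_same u v Hu Hv) as Hsame.
  unfold iverson; destruct (Nat.eqb_spec (pair_clustering u) (pair_clustering v)) as [Hs|Hs];
    destruct (Nat.eqb_spec v (p u)) as [Hvpu|Hvpu], (Nat.eqb_spec v u) as [Hvu|Hvu].
  - pose proof (Hpartner Hvpu); lra.
  - pose proof (Hpartner Hvpu); lra.
  - lra.
  - apply Hsame in Hs; tauto.
  - exfalso; apply Hs, Hsame; auto.
  - exfalso; apply Hs, Hsame; auto.
  - exfalso; apply Hs, Hsame; auto.
  - lra.
Qed.

Lemma Mod_pair_clustering_ge :
  matching_weight n E l p / (2 * mtot n E l) - dmax n E l / mtot n E l
  <= Mod n E l pair_clustering.
Proof.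
  rewrite Mod_pairs by exact pair_clustering_is_clustering.
  pose proof (fsum_le n _ _ (fun u Hu => fsum_le n _ _ (fun v Hv => pair_term_ge u v Hu Hv)))
    as Hle.
  rewrite (fsum_ext n _ (fun u => mweight E l p u - dmax n E l / mtot n E l * deg n E l u))
    in Hle.
  2:{ intros u Hu; destruct (Hp u Hu) as (Hpu & _).
      unfold iverson; rewrite !fsum_minus, !fsum_delta by assumption.
      unfold cost; field; lra. }
  rewrite fsum_minus, fsum_scal, (sum_deg n E l) in Hle.
  unfold matching_weight.
  replace (fsum n (mweight E l p) / (2 * mtot n E l) - dmax n E l / mtot n E l)
    with (/ (2 * mtot n E l) * (fsum n (mweight E l p) - dmax n E l / mtot n E l * (2 * mtot n E l)))
    by (field; lra).
  apply Rmult_le_compat_l; [left; apply Rinv_0_lt_compat|]; lra.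
Qed.

End PairClustering.

Lemma two_mtot_ge_size n E l : wgraph n E l -> connected n E -> normalized n E l ->
  (2 <= n)%nat -> INR n <= 2 * mtot n E l.
Proof.
  intros G Hc Hnorm Hn.
  rewrite <- (sum_edge_ind n E l G Hnorm), <- (Rmult_1_r (INR n)), <- fsum_const.
  apply fsum_le; intros u Hu; now apply (connected_has_neighbour n E l G).
Qed.

Lemma dmax_ge1 n E l : (0 < n)%nat -> INR n <= 2 * mtot n E l -> 1 <= dmax n E l.
Proof.
  intros Hn Hsize.
  assert (Hsum : fsum n (deg n E l) <= INR n * dmax n E l).
  { rewrite <- fsum_const; apply fsum_le; intros; now apply deg_le_dmax. }
  rewrite (sum_deg n E l) in Hsum.
  apply Rmult_le_reg_l with (INR n); [apply lt_0_INR; lia|lra].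
Qed.

Lemma root5_facts n : (3 <= n)%nat ->
  1 <= Rpower (INR n) (1/5) /\ Rpower (INR n) (1/5) ^ 5 = INR n /\ 1 <= ln (INR n).
Proof.
  intros Hn.
  assert (Hn3 : 3 <= INR n) by (replace 3 with (INR 3) by (simpl; lra); now apply le_INR).
  split; [|split].
  - apply Rle_trans with (Rpower (INR n) 0); [rewrite Rpower_O; lra|apply Rle_Rpower; lra].
  - rewrite <- Rpower_pow by (unfold Rpower; apply exp_pos).
    rewrite Rpower_mult; replace (1/5 * INR 5) with 1 by (simpl; lra).
    apply Rpower_1; lra.
  - rewrite <- (ln_exp 1); pose proof exp_le_3.
    destruct (Rle_lt_or_eq_dec (exp 1) (INR n)) as [Hlt|Heq]; [lra| |now rewrite Heq].
    left; apply ln_increasing; auto using exp_pos.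
Qed.

(* With [x = n^(1/5)], the degree bound gives [D < x/16] while [2m >= n = x^5]. *)
Lemma mtot_gt_dmax_cubed x D m : 1 <= x -> 1 <= D -> D < x / 16 -> x ^ 5 <= 2 * m ->
  64 * D ^ 3 < m.
Proof.
  intros Hx HD HDx Hm.
  assert (HD3 : D ^ 3 < (x / 16) ^ 3).
  { set (y := x / 16) in *; assert (D * D < y * y) by nra; nra. }
  assert (Hx35 : x ^ 3 <= x ^ 5).
  { replace (x ^ 5) with (x ^ 3 * x ^ 2) by ring.
    assert (1 <= x ^ 2) by nra; assert (0 <= x ^ 3) by (apply pow_le; lra); nra. }
  assert (0 < x ^ 3) by (apply pow_lt; lra).
  replace ((x / 16) ^ 3) with (x ^ 3 / 4096) in HD3 by field.
  lra.
Qed.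

Lemma pair_bound_arith D m S : 1 <= D -> 0 < m -> 0 <= S -> 64 * D ^ 3 < m ->
  m <= (4 * D - 1) * S + 4 * m * (1 / (256 * D ^ 2)) ->
  1 / (8 * D) < S / (2 * m) - D / m.
Proof.
  intros HD Hm HS Hbig Hmain.
  set (q := m / (64 * D)).
  assert (Hq : m = 64 * D * q) by (unfold q; field; lra).
  assert (HDq : D ^ 2 < q).
  { apply Rmult_lt_reg_l with (64 * D); [lra|].
    replace (64 * D * D ^ 2) with (64 * D ^ 3) by ring; lra. }
  assert (Hslack : 4 * m * (1 / (256 * D ^ 2)) <= q).
  { rewrite Hq; replace (4 * (64 * D * q) * (1 / (256 * D ^ 2))) with (q / D) by (field; lra).
    apply Rmult_le_reg_l with D; [lra|].
    replace (D * (q / D)) with q by (field; lra); nra. }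
  assert (HS16 : 16 * q + 2 * D < S).
  { apply Rmult_lt_reg_l with (4 * D - 1); [lra|].
    assert (D ^ 2 = D * D) by ring; nra. }
  assert (0 < q) by nra.
  replace (S / (2 * m) - D / m) with (1 / (8 * D) + (S - 16 * q - 2 * D) / (2 * m))
    by (rewrite Hq; field; lra).
  assert (0 < (S - 16 * q - 2 * D) / (2 * m)) by (apply Rdiv_lt_0_compat; lra).
  lra.
Qed.

Theorem lemma11 :
  exists N : nat, forall n : nat, (N <= n)%nat ->
  forall (E : nat -> nat -> bool) (l : nat -> nat -> R),
    wgraph n E l ->
    connected n E ->
    normalized n E l ->
    dmax n E l < Rpower (INR n) (1/5) / (16 * ln (INR n)) ->
    OPT_gt n E l (1 / (8 * dmax n E l)).
Proof.
  exists 3%nat; intros n Hn E l G Hc Hnorm Hdeg.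
  destruct (root5_facts n Hn) as (Hx1 & Hx5 & Hln).
  set (x := Rpower (INR n) (1/5)) in *; set (D := dmax n E l) in *; set (m := mtot n E l).
  assert (Hsize : INR n <= 2 * m) by (apply (two_mtot_ge_size n E l G Hc Hnorm); lia).
  assert (HD1 : 1 <= D) by (apply (dmax_ge1 n E l); [lia|exact Hsize]).
  assert (HDx : D < x / 16).
  { apply Rlt_le_trans with (1 := Hdeg); unfold Rdiv.
    apply Rmult_le_compat_l; [lra|apply Rinv_le_contravar; lra]. }
  assert (Hbig : 64 * D ^ 3 < m) by (apply mtot_gt_dmax_cubed with x; lra).
  set (eps := 1 / (256 * D ^ 2)).
  assert (Heps : 0 < eps) by (unfold eps; apply Rdiv_lt_0_compat; [lra|]; nra).
  destruct (exists_locally_optimal_matching n E l G eps Heps) as (p & Hp & Hopt).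
  assert (Hm : 0 < m) by (pose proof (lt_0_INR n ltac:(lia)); lra).
  exists (pair_clustering p); split; [apply pair_clustering_is_clustering|].
  apply Rlt_le_trans with (2 := Mod_pair_clustering_ge n E l G p Hp Hm).
  apply pair_bound_arith; auto.
  - apply fsum_nonneg, (mweight_ge0 n E l G p Hp).
  - exact (total_weight_le_matching_weight n E l G p eps Hp (Rlt_le _ _ Heps) Hopt Hnorm).
Qed.
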